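(* Let $m, n \ge 0$ be integers. If each of the $2 \times m$ and $2 \times n$ Domineering boards has outcome ${\rm 2nd}$ or $V$, then the $2 \times (m+n+1)$ board has outcome ${\rm 1st}$ or $V$ (i.e. Vera wins the $2\times(m+n+1)$ board whenever she moves first).
   Context: Domineering on an $a \times b$ board (a rectangle of $a$ rows and $b$ columns of unit cells): two players, Vera and Hepzibah, alternately place dominoes on empty cells; Vera places vertical dominoes (covering two vertically adjacent empty cells), Hepzibah places horizontal dominoes (covering two horizontally adjacent empty cells). A player who cannot move on her turn loses. The outcome class is $V$ if Vera wins with optimal play regardless of who moves first, $H$ if Hepzibah wins regardless of who moves first, ${\rm 1st}$ if the first player wins, and ${\rm 2nd}$ if the second player wins. The $2\times 0$ board is the empty board. *)

From mathcomp Require Import all_boot.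
Set Implicit Arguments. Unset Strict Implicit. Unset Printing Implicit Defensive.

(* Domineering on an a x b board: cells are (row, column) in 'I_a * 'I_b.
   A position is the set of occupied cells. *)
Definition cell (a b : nat) := ('I_a * 'I_b)%type.

Definition vdomino a b (c1 c2 : cell a b) : bool :=
  ((c1.1 : nat).+1 == c2.1) && (c1.2 == c2.2).
Definition hdomino a b (c1 c2 : cell a b) : bool :=
  (c1.1 == c2.1) && ((c1.2 : nat).+1 == c2.2).

Definition legal a b (vera : bool) (S : {set cell a b}) (c1 c2 : cell a b) : bool :=
  [&& (if vera then vdomino c1 c2 else hdomino c1 c2), c1 \notin S & c2 \notin S].

(* [win k vera S]: the player to move (Vera iff [vera]) wins from position S
   (normal play: a player unable to move loses), computed with fuel k. *)
Fixpoint win a b (k : nat) (vera : bool) (S : {set cell a b}) : bool :=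
  match k with
  | 0 => false
  | k'.+1 => [exists c1 : cell a b, exists c2 : cell a b,
               legal vera S c1 c2 && ~~ win k' (~~ vera) (S :|: [set c1; c2])]
  end.

(* Each move occupies two new cells, so at most #|cell a b| moves are ever made;
   fuel #|cell a b|.+1 is therefore sufficient and gives the true game value. *)
Definition first_player_wins (a b : nat) (vera : bool) : bool :=
  @win a b #|{: cell a b}|.+1 vera set0.

Inductive outcome := OV | OH | O1st | O2nd.

Definition domineering_outcome (a b : nat) : outcome :=
  match first_player_wins a b true, first_player_wins a b false with
  | true, true => O1st
  | false, false => O2nd
  | true, false => OV
  | false, true => OH
  end.

From mathcomp Require Import all_boot zify.
Set Implicit Arguments. Unset Strict Implicit. Unset Printing Implicit Defensive.

(* Vera moving first fills the middle column with one vertical domino. What remains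
   is a 2 x m and a 2 x n board that Hepzibah's horizontal dominoes can never join,
   with Hepzibah to move. By hypothesis Vera wins each part as second player, so she
   answers every move of Hepzibah inside the same part with her winning reply there.
   The invariant "Hepzibah to move loses on both parts" is kept, so Hepzibah is the
   first to run out of moves. *)

Section GameValue.
Variables a b : nat.
Implicit Types (S X : {set cell a b}) (v : bool).

Lemma card_setCU_lt S X x : x \notin S -> x \in X -> #|~: (S :|: X)| < #|~: S|.
Proof.
move=> xS xX; apply: proper_card; rewrite properE setCS ?subsetUl //=.
by apply/subsetPn; exists x; rewrite !inE ?xS ?xX ?orbT.
Qed.

Lemma legal_card_lt v S c1 c2 :
  legal v S c1 c2 -> #|~: (S :|: [set c1; c2])| < #|~: S|.
Proof. by case/and3P=> _ c1S _; apply: card_setCU_lt c1S (set21 _ _). Qed.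

Lemma win_fuelE k1 k2 v S :
  #|~: S| < k1 -> #|~: S| < k2 -> win k1 v S = win k2 v S.
Proof.
elim: k1 k2 v S => [|k1 IHk] [|k2] v S //= lt_k1 lt_k2.
apply: eq_existsb => c1; apply: eq_existsb => c2.
case legal_c: (legal v S c1 c2) => //=; congr negb.
have lt_S := legal_card_lt legal_c.
by apply: IHk; apply: leq_trans lt_S _.
Qed.

Definition wins v S := win #|~: S|.+1 v S.

Lemma winsE v S : wins v S =
  [exists c1, exists c2, legal v S c1 c2 && ~~ wins (~~ v) (S :|: [set c1; c2])].
Proof.
rewrite {1}/wins /=; apply: eq_existsb => c1; apply: eq_existsb => c2.
case legal_c: (legal v S c1 c2) => //=; congr negb.
by rewrite /wins; apply: win_fuelE (legal_card_lt legal_c) _.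
Qed.

Lemma first_player_winsE v : first_player_wins a b v = wins v set0.
Proof. by rewrite /first_player_wins /wins setC0 cardsT. Qed.

Lemma hepzibah_loses_by_invariant (P : {set cell a b} -> Prop) :
    (forall S c1 c2, P S -> legal false S c1 c2 ->
       exists e1 e2, legal true (S :|: [set c1; c2]) e1 e2 /\
                     P (S :|: [set c1; c2] :|: [set e1; e2])) ->
  forall S, P S -> ~~ wins false S.
Proof.
move=> answer S; move: {-1}#|~: S|.+1 (ltnSn #|~: S|) => k.
elim: k S => [|k IHk] S // lt_S PS; rewrite winsE.
apply/existsP=> -[c1 /existsP[c2 /andP[legal_c /negP]]]; apply.
have [e1 [e2 [legal_e PS']]] := answer S c1 c2 PS legal_c.
rewrite winsE; apply/existsP; exists e1; apply/existsP; exists e2.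
rewrite legal_e; apply: IHk PS'.
by have := legal_card_lt legal_c; have := legal_card_lt legal_e; lia.
Qed.
End GameValue.

Section Preimage.
Variables (aT aT' rT : finType) (f : aT -> rT).
Implicit Types (S : {set rT}).

Lemma preimsetU2 S x y : injective f ->
  f @^-1: (S :|: [set f x; f y]) = f @^-1: S :|: [set x; y].
Proof. by move=> f_inj; apply/setP=> d; rewrite !inE !(inj_eq f_inj). Qed.

Lemma preimsetU2_disjoint (g : aT' -> rT) S x y :
  (forall d e, f d != g e) -> f @^-1: (S :|: [set g x; g y]) = f @^-1: S.
Proof. by move=> fg; apply/setP=> d; rewrite !inE !(negbTE (fg _ _)) !orbF. Qed.
End Preimage.

(* Vera's moves need only transfer from the small board to the big one, Hepzibah's back. *)
Definition domino_embedding a k a' N (f : cell a k -> cell a' N) : Prop :=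
  [/\ injective f, forall e1 e2, vdomino e1 e2 -> vdomino (f e1) (f e2)
    & forall d1 d2, hdomino (f d1) (f d2) -> hdomino d1 d2].

Lemma vera_answers_locally a k a' N (f : cell a k -> cell a' N)
    (S : {set cell a' N}) d1 d2 :
    domino_embedding f -> ~~ wins false (f @^-1: S) -> legal false S (f d1) (f d2) ->
  exists e1 e2, legal true (S :|: [set f d1; f d2]) (f e1) (f e2) /\
    ~~ wins false (f @^-1: (S :|: [set f d1; f d2] :|: [set f e1; f e2])).
Proof.
case=> f_inj f_vdomino f_hdomino lose_S /and3P[hd d1S d2S].
have : wins true (f @^-1: S :|: [set d1; d2]).
  apply: contraNT lose_S => lose_S'; rewrite winsE.
  apply/existsP; exists d1; apply/existsP; exists d2.
  by rewrite /legal f_hdomino // !inE d1S d2S lose_S'.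
rewrite -preimsetU2 // winsE => /existsP[e1 /existsP[e2 /andP[/and3P[ve e1S e2S] win_e]]].
exists e1, e2; rewrite preimsetU2 //; split=> //.
by move: e1S e2S; rewrite /legal f_vdomino // !inE => -> ->.
Qed.

Section ColumnShift.
Variables (a k N s : nat).
Hypothesis le_skN : s + k <= N.

Lemma shift_col_lt (j : 'I_k) : s + j < N.
Proof. by have := ltn_ord j; lia. Qed.

Definition shift_cell (d : cell a k) : cell a N := (d.1, Ordinal (shift_col_lt d.2)).

Lemma shift_cell_embedding : domino_embedding shift_cell.
Proof.
split.
- by move=> [r1 j1] [r2 j2] [-> /eqP]; rewrite eqn_add2l => /eqP/val_inj->.
- by move=> e1 e2 /andP[? /eqP e12]; rewrite /vdomino /= -val_eqE /= e12 eqxx andbT.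
- move=> [r1 j1] [r2 j2] /andP[/= r12 /eqP /= e12].
  by rewrite /hdomino r12 /=; apply/eqP; lia.
Qed.
End ColumnShift.

Section MiddleColumn.
Variables a m n : nat.

Lemma mid_col_lt : m < m + n + 1. Proof. lia. Qed.
Lemma left_width : 0 + m <= m + n + 1. Proof. lia. Qed.
Lemma right_width : m.+1 + n <= m + n + 1. Proof. lia. Qed.

Definition mid_col : 'I_(m + n + 1) := Ordinal mid_col_lt.

Definition left_cell : cell a m -> cell a (m + n + 1) := shift_cell left_width.
Definition right_cell : cell a n -> cell a (m + n + 1) := shift_cell right_width.

Lemma left_cell_embedding : domino_embedding left_cell.
Proof. exact: shift_cell_embedding. Qed.

Lemma right_cell_embedding : domino_embedding right_cell.
Proof. exact: shift_cell_embedding. Qed.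

Lemma left_cell_col d : (left_cell d).2 < m.
Proof. exact: ltn_ord d.2. Qed.

Lemma right_cell_col d : m < (right_cell d).2.
Proof. by rewrite /= ltnS leq_addr. Qed.

Lemma cell_off_mid_col (c : cell a (m + n + 1)) : c.2 != mid_col ->
  (exists d, c = left_cell d) \/ (exists d, c = right_cell d).
Proof.
case: c => r [j lt_j] /=; rewrite -val_eqE /= => j_mid.
have [lt_jm | le_mj] := ltnP j m.
- by left; exists (r, Ordinal lt_jm); congr pair; apply: val_inj.
- have lt_j' : j - m.+1 < n by lia.
  by right; exists (r, Ordinal lt_j'); congr pair; apply: val_inj => /=; lia.
Qed.

Lemma left_right_cell_neq d e : left_cell d != right_cell e.
Proof. by apply: contraTneq (left_cell_col d) => ->; rewrite -leqNgt ltnW ?right_cell_col. Qed.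

Lemma right_left_cell_neq d e : right_cell d != left_cell e.
Proof. by rewrite eq_sym left_right_cell_neq. Qed.

Lemma hdomino_off_mid_col c1 c2 :
    hdomino c1 c2 -> c1.2 != mid_col -> c2.2 != mid_col ->
  (exists d1 d2, c1 = left_cell d1 /\ c2 = left_cell d2) \/
  (exists d1 d2, c1 = right_cell d1 /\ c2 = right_cell d2).
Proof.
move=> /andP[_ /eqP c12] /cell_off_mid_col[[d1 e1]|[d1 e1]] /cell_off_mid_col[[d2 e2]|[d2 e2]];
  rewrite {}e1 {}e2 in c12 *.
- by left; exists d1, d2.
- by have := left_cell_col d1; have := right_cell_col d2; lia.
- by have := right_cell_col d1; have := left_cell_col d2; lia.
- by right; exists d1, d2.
Qed.

Definition split_position (S : {set cell a (m + n + 1)}) : Prop :=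
  [/\ forall r, (r, mid_col) \in S,
       ~~ wins false (left_cell @^-1: S) & ~~ wins false (right_cell @^-1: S)].

Lemma split_position_answer S c1 c2 : split_position S -> legal false S c1 c2 ->
  exists e1 e2, legal true (S :|: [set c1; c2]) e1 e2 /\
                split_position (S :|: [set c1; c2] :|: [set e1; e2]).
Proof.
case=> mid_S lose_L lose_R legal_c; case/and3P: (legal_c) => hd c1S c2S.
have off_mid c : c \notin S -> c.2 != mid_col.
  by apply: contraNneq => c_mid; rewrite [c]surjective_pairing c_mid mid_S.
case: (hdomino_off_mid_col hd (off_mid _ c1S) (off_mid _ c2S)) => -[d1 [d2 [e1 e2]]];
  rewrite {}e1 {}e2 in legal_c *.
- have [e1 [e2 [legal_e lose_L']]] := vera_answers_locally left_cell_embedding lose_L legal_c.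
  exists (left_cell e1), (left_cell e2); split=> //; split=> [r|//|].
  + by rewrite !inE mid_S.
  + by rewrite !preimsetU2_disjoint //; apply: right_left_cell_neq.
- have [e1 [e2 [legal_e lose_R']]] := vera_answers_locally right_cell_embedding lose_R legal_c.
  exists (right_cell e1), (right_cell e2); split=> //; split=> [r||//].
  + by rewrite !inE mid_S.
  + by rewrite !preimsetU2_disjoint //; apply: left_right_cell_neq.
Qed.
End MiddleColumn.

Lemma preimset_mid_col a a' k m n (f : cell a' k -> cell a (m + n + 1)) (r1 r2 : 'I_a) :
    (forall d, (f d).2 != mid_col m n) ->
  f @^-1: [set (r1, mid_col m n); (r2, mid_col m n)] = set0.
Proof.
move=> f_off; apply/setP=> d; rewrite !inE.
by apply/negbTE; apply/orP=> -[] /eqP fd; have := f_off d; rewrite fd eqxx.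
Qed.

Lemma vera_wins_by_filling_mid_col m n :
    ~~ wins false (set0 : {set cell 2 m}) -> ~~ wins false (set0 : {set cell 2 n}) ->
  wins true (set0 : {set cell 2 (m + n + 1)}).
Proof.
move=> lose_m lose_n; rewrite winsE.
apply/existsP; exists (ord0, mid_col m n); apply/existsP; exists (ord_max, mid_col m n).
rewrite /legal /vdomino !inE !eqxx /=.
apply: (hepzibah_loses_by_invariant (@split_position_answer 2 m n)).
split; rewrite ?set0U ?preimset_mid_col //.
- by case=> -[|[|r]] // lt_r; rewrite !inE !xpair_eqE -!val_eqE /= eqxx ?orbT.
- by move=> d; rewrite -val_eqE neq_ltn left_cell_col.
- by move=> d; rewrite -val_eqE neq_ltn right_cell_col orbT.
Qed.

Lemma hepzibah_first_loses k :
    domineering_outcome 2 k = O2nd \/ domineering_outcome 2 k = OV ->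
  ~~ wins false (set0 : {set cell 2 k}).
Proof. by rewrite /domineering_outcome !first_player_winsE; do 2!case: wins => //; case. Qed.

Theorem mainTheorem9 (m n : nat) :
  (domineering_outcome 2 m = O2nd \/ domineering_outcome 2 m = OV) ->
  (domineering_outcome 2 n = O2nd \/ domineering_outcome 2 n = OV) ->
  (domineering_outcome 2 (m + n + 1) = O1st \/ domineering_outcome 2 (m + n + 1) = OV).
Proof.
move=> /hepzibah_first_loses lose_m /hepzibah_first_loses lose_n.
rewrite /domineering_outcome !first_player_winsE vera_wins_by_filling_mid_col //.
by case: wins; [left | right].
Qed.
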